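(* Let $G$ be a group with identity $1_G$ and let $\mathcal{B}_1,\mathcal{B}_2:G\to G$ be arbitrary maps. Let $a\circ b=\mathcal{B}_1(a)b\mathcal{B}_2(a)$, and for $a\in G$ define inner automorphisms $\lambda_a,\mu_a$ of $G$ by $\lambda_a(b)=\mathcal{B}_2(a)^{-1}b\mathcal{B}_2(a)$ and $\mu_a(b)=\mathcal{B}_1(a)b\mathcal{B}_1(a)^{-1}$. The following are equivalent: (i) $\circ$ is associative (and then $(G,\cdot,\circ,\Phi)$ is a skew truss with $\Phi(a)=\mathcal{B}_1(a)\mathcal{B}_2(a)$); (ii) $\lambda_a\lambda_b=\lambda_{a\circ b}$ and $(a\circ b)\circ 1_G=a\circ(b\circ 1_G)$ for all $a,b\in G$; (iii) $\mu_a\mu_b=\mu_{a\circ b}$ and $(a\circ b)\circ 1_G=a\circ(b\circ 1_G)$ for all $a,b\in G$.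
   Context: A skew (left) truss is a quadruple $(G,\cdot,\circ,\Phi)$ where $(G,\cdot)$ is a group, $\circ$ is an associative binary operation on $G$, and $\Phi:G\to G$ is a map with $a\circ(b\cdot c)=(a\circ b)\cdot\Phi(a)^{-1}\cdot(a\circ c)$ for all $a,b,c\in G$. *)

Definition is_group {G : Type} (mul : G -> G -> G) (inv : G -> G) (e : G) : Prop :=
  (forall a b c, mul a (mul b c) = mul (mul a b) c) /\
  (forall a, mul e a = a) /\ (forall a, mul a e = a) /\
  (forall a, mul (inv a) a = e) /\ (forall a, mul a (inv a) = e).

Definition associative_op {G : Type} (op : G -> G -> G) : Prop :=
  forall a b c, op a (op b c) = op (op a b) c.

Definition is_skew_truss {G : Type} (mul : G -> G -> G) (inv : G -> G)
  (circ : G -> G -> G) (Phi : G -> G) : Prop :=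
  associative_op circ /\
  forall a b c, circ a (mul b c) = mul (mul (circ a b) (inv (Phi a))) (circ a c).

Definition circB {G : Type} (mul : G -> G -> G) (B1 B2 : G -> G) (a b : G) : G :=
  mul (mul (B1 a) b) (B2 a).

Definition lambdaB {G : Type} (mul : G -> G -> G) (inv : G -> G) (B2 : G -> G) (a b : G) : G :=
  mul (mul (inv (B2 a)) b) (B2 a).

Definition muB {G : Type} (mul : G -> G -> G) (inv : G -> G) (B1 : G -> G) (a b : G) : G :=
  mul (mul (B1 a) b) (inv (B1 a)).

From Stdlib Require Import Setoid.

(* Associativity of [a o b = B1(a) b B2(a)] says that the two-sided multiplications
   [c |-> B1(a o b) c B2(a o b)] and [c |-> (B1(a) B1(b)) c (B2(b) B2(a))] coincide.
   Two maps [c |-> p c q] and [c |-> p' c q'] coincide iff they agree at [1] and induce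
   the same conjugation, since [p c q = (p q) (q^-1 c q) = (p c p^-1) (p q)]; reading
   the conjugation off the right factor gives (ii), off the left factor gives (iii). *)

Section TwoSidedMultiplication.

Context {G : Type} {mul : G -> G -> G} {inv : G -> G} {e : G}.
Hypothesis HG : is_group mul inv e.

Local Infix "·" := mul (at level 40, left associativity).
Local Notation "x ⁻¹" := (inv x) (at level 2, format "x ⁻¹").

Lemma mulA x y z : x · (y · z) = x · y · z.
Proof. apply HG. Qed.

Lemma mul1g x : e · x = x.
Proof. apply HG. Qed.

Lemma mulg1 x : x · e = x.
Proof. apply HG. Qed.

Lemma mulVg x : x⁻¹ · x = e.
Proof. apply HG. Qed.

Lemma mulgV x : x · x⁻¹ = e.
Proof. apply HG. Qed.

Lemma mulKg x y : x⁻¹ · (x · y) = y.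
Proof. now rewrite mulA, mulVg, mul1g. Qed.

Lemma mulgK x y : x · y · y⁻¹ = x.
Proof. now rewrite <- mulA, mulgV, mulg1. Qed.

Lemma mulgKV x y : x · y⁻¹ · y = x.
Proof. now rewrite <- mulA, mulVg, mulg1. Qed.

Lemma mulgI x y z : x · y = x · z -> y = z.
Proof. intros E. now rewrite <- (mulKg x y), E, mulKg. Qed.

Lemma mulIg x y z : y · x = z · x -> y = z.
Proof. intros E. now rewrite <- (mulgK y x), E, mulgK. Qed.

Lemma invMg x y : (x · y)⁻¹ = y⁻¹ · x⁻¹.
Proof.
  apply (mulgI (x · y)).
  now rewrite mulgV, mulA, mulgK, mulgV.
Qed.

Lemma two_sided_lambda_split x y c : x · c · y = x · y · (y⁻¹ · c · y).
Proof. now rewrite !mulA, mulgK. Qed.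

Lemma two_sided_mu_split x y c : x · c · y = x · c · x⁻¹ · (x · y).
Proof. now rewrite mulA, mulgKV. Qed.

Lemma two_sided_eq_lambda p q p' q' :
  (forall c, p · c · q = p' · c · q') <->
  p · q = p' · q' /\ (forall c, q⁻¹ · c · q = q'⁻¹ · c · q').
Proof.
  split.
  - intros H.
    assert (Hpq : p · q = p' · q') by (rewrite <- (mulg1 p), <- (mulg1 p'); apply H).
    split; [exact Hpq|]. intros c.
    apply (mulgI (p · q)).
    rewrite <- two_sided_lambda_split, Hpq, <- two_sided_lambda_split. apply H.
  - intros [Hpq H] c.
    now rewrite (two_sided_lambda_split p), (two_sided_lambda_split p'), Hpq, H.
Qed.

Lemma two_sided_eq_mu p q p' q' :
  (forall c, p · c · q = p' · c · q') <->
  p · q = p' · q' /\ (forall c, p · c · p⁻¹ = p' · c · p'⁻¹).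
Proof.
  split.
  - intros H.
    assert (Hpq : p · q = p' · q') by (rewrite <- (mulg1 p), <- (mulg1 p'); apply H).
    split; [exact Hpq|]. intros c.
    apply (mulIg (p · q)).
    rewrite <- two_sided_mu_split, Hpq, <- two_sided_mu_split. apply H.
  - intros [Hpq H] c.
    now rewrite (two_sided_mu_split p), (two_sided_mu_split p'), Hpq, H.
Qed.

Variables B1 B2 : G -> G.

Local Notation circ := (circB mul B1 B2).
Local Notation lam := (lambdaB mul inv B2).
Local Notation mu := (muB mul inv B1).

Lemma circB_circB a b c : circ a (circ b c) = B1 a · B1 b · c · (B2 b · B2 a).
Proof. unfold circB. now rewrite !mulA. Qed.

Lemma circB_one a : circ a e = B1 a · B2 a.
Proof. unfold circB. now rewrite mulg1. Qed.

Lemma lambdaB_lambdaB a b x : lam a (lam b x) = (B2 b · B2 a)⁻¹ · x · (B2 b · B2 a).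
Proof. unfold lambdaB. now rewrite invMg, !mulA. Qed.

Lemma muB_muB a b x : mu a (mu b x) = B1 a · B1 b · x · (B1 a · B1 b)⁻¹.
Proof. unfold muB. now rewrite invMg, !mulA. Qed.

Lemma circB_left_distr a b c :
  circ a (b · c) = circ a b · (B1 a · B2 a)⁻¹ · circ a c.
Proof. unfold circB. now rewrite invMg, !mulA, mulgK, mulgKV. Qed.

Lemma circB_assoc_at_iff_lambda a b :
  (forall c, circ a (circ b c) = circ (circ a b) c) <->
  (forall x, lam a (lam b x) = lam (circ a b) x) /\ circ (circ a b) e = circ a (circ b e).
Proof.
  setoid_rewrite circB_circB. setoid_rewrite lambdaB_lambdaB.
  rewrite (two_sided_eq_lambda _ _ (B1 (circ a b)) (B2 (circ a b))).
  rewrite circB_one, mulg1.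
  split; intros [Hpq Hconj]; split; auto.
Qed.

Lemma circB_assoc_at_iff_mu a b :
  (forall c, circ a (circ b c) = circ (circ a b) c) <->
  (forall x, mu a (mu b x) = mu (circ a b) x) /\ circ (circ a b) e = circ a (circ b e).
Proof.
  setoid_rewrite circB_circB. setoid_rewrite muB_muB.
  rewrite (two_sided_eq_mu _ _ (B1 (circ a b)) (B2 (circ a b))).
  rewrite circB_one, mulg1.
  split; intros [Hpq Hconj]; split; auto.
Qed.

End TwoSidedMultiplication.

Theorem theorem3p4 (G : Type) (mul : G -> G -> G) (inv : G -> G) (e : G)
  (HG : is_group mul inv e) (B1 B2 : G -> G) :
  let circ := circB mul B1 B2 in
  let lam := lambdaB mul inv B2 in
  let mu := muB mul inv B1 in
  (associative_op circ -> is_skew_truss mul inv circ (fun a => mul (B1 a) (B2 a))) /\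
  (associative_op circ <->
     (forall a b, (forall x, lam a (lam b x) = lam (circ a b) x) /\
                  circ (circ a b) e = circ a (circ b e))) /\
  (associative_op circ <->
     (forall a b, (forall x, mu a (mu b x) = mu (circ a b) x) /\
                  circ (circ a b) e = circ a (circ b e))).
Proof.
  intros circ lam mu. unfold associative_op.
  split; [|split].
  - intros Hassoc. split; [exact Hassoc|]. exact (circB_left_distr HG B1 B2).
  - split.
    + intros H a b. now apply circB_assoc_at_iff_lambda.
    + intros H a b c. now apply (circB_assoc_at_iff_lambda HG B1 B2 a b).
  - split.
    + intros H a b. now apply circB_assoc_at_iff_mu.
    + intros H a b c. now apply (circB_assoc_at_iff_mu HG B1 B2 a b).
Qed.
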